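(* Let $G$ be an ST graph. An arc $v\to w$ of $G$ is disimplicial in $G$ if and only if $\mathrm{repr}(v)\to\mathrm{repr}(w)$ is disimplicial in $\mathrm{Repr}(G)$.
   Context: A digraph $G$ is a finite set $V(G)$ with $E(G)\subseteq V(G)\times V(G)$. $N^+(v)$, $N^-(v)$ are the out- and in-neighborhoods and $N(v)=N^+(v)\cup N^-(v)$. A source has $N^-(v)=\emptyset$, a sink has $N^+(v)=\emptyset$; $G$ is an ST graph if every vertex is a source or a sink. An arc $v\to w$ is disimplicial if $x\to y$ is an arc for all $x\in N^-(w)$, $y\in N^+(v)$. Two vertices $v,w$ of an ST graph are twins when $N(v)=N(w)$; a twin block is a maximal set of pairwise twin vertices (the blocks partition $V(G)$). A function $\mathrm{repr}$ selects one vertex $\mathrm{repr}(B)\in B$ of each block $B$, and $\mathrm{repr}(v)=\mathrm{repr}(B)$ for $v\in B$. The twin reduction $\mathrm{Repr}(G)$ is the subdigraph of $G$ induced by $\{\mathrm{repr}(B): B \text{ a twin block}\}$. *)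

From mathcomp Require Import all_boot.
Set Implicit Arguments. Unset Strict Implicit. Unset Printing Implicit Defensive.

Section Digraph.
Variables (T : finType) (E : rel T).

Definition outN (v : T) : {set T} := [set y | E v y].
Definition inN (v : T) : {set T} := [set x | E x v].
Definition nbhd (v : T) : {set T} := outN v :|: inN v.

Definition is_source (v : T) : bool := inN v == set0.
Definition is_sink (v : T) : bool := outN v == set0.

Definition ST_graph : Prop := forall v, is_source v || is_sink v.

Definition twins (v w : T) : bool := nbhd v == nbhd w.

Definition repr_function (repr : T -> T) : Prop :=
  (forall v, twins (repr v) v) /\ (forall v w, twins v w -> repr v = repr w).

(* vertex set of the twin reduction Repr(G) *)
Definition repr_set (repr : T -> T) : {set T} := [set repr v | v in T].

Definition disimplicial_in (S : {set T}) (v w : T) : bool :=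
  [&& v \in S, w \in S, E v w &
   [forall x in S, forall y in S, (E x w && E v y) ==> E x y]].

Definition disimplicial (v w : T) : bool := disimplicial_in [set: T] v w.

End Digraph.

From mathcomp Require Import all_boot.
Set Implicit Arguments. Unset Strict Implicit.

(* In an ST graph no directed path has length two, so a vertex is either the
   tail or the head of all its arcs; twins, having the same neighbours, then
   have the same in- and out-neighbourhoods.  Hence arcs of G correspond
   exactly to arcs between representatives, and the disimplicial condition
   over G is the same condition over Repr(G), quantified over the images of
   repr. *)

Section TwinArcs.
Variables (T : finType) (E : rel T).
Hypothesis ST : ST_graph E.

Lemma ST_no_path2 x y z : E x y -> E y z -> False.
Proof.
move=> Exy Eyz; have /orP [/eqP|/eqP] := ST y; move/setP.
  by move/(_ x); rewrite !inE Exy.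
by move/(_ z); rewrite !inE Eyz.
Qed.

Lemma arc_twinl x x' y : twins E x x' -> E x y -> E x' y.
Proof.
move=> /eqP Nxx' Exy.
have : y \in nbhd E x' by rewrite -Nxx' !inE Exy.
by rewrite !inE => /orP [// | Eyx']; case: (ST_no_path2 Exy Eyx').
Qed.

Lemma arc_twinr x y y' : twins E y y' -> E x y -> E x y'.
Proof.
move=> /eqP Nyy' Exy.
have : x \in nbhd E y' by rewrite -Nyy' !inE Exy orbT.
by rewrite !inE => /orP [Ey'x | //]; case: (ST_no_path2 Ey'x Exy).
Qed.

Lemma arc_twinE x x' y y' : twins E x x' -> twins E y y' -> E x y = E x' y'.
Proof.
move=> Txx' Tyy'; have twins_sym a b : twins E a b -> twins E b a.
  by rewrite /twins eq_sym.
apply/idP/idP => [Exy | Ex'y'].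
  exact: arc_twinr Tyy' (arc_twinl Txx' Exy).
exact: arc_twinr (twins_sym _ _ Tyy') (arc_twinl (twins_sym _ _ Txx') Ex'y').
Qed.

Lemma arc_reprE repr x y : repr_function E repr -> E x y = E (repr x) (repr y).
Proof. by case=> repr_twin _; rewrite (arc_twinE (repr_twin x) (repr_twin y)). Qed.

End TwinArcs.

Lemma forall2_imset (T : finType) (f : T -> T) (Q : T -> T -> bool) :
  [forall x, forall y, Q (f x) (f y)] =
  [forall x in f @: T, forall y in f @: T, Q x y].
Proof.
apply/forallP/forallP => [H a | H x].
  apply/implyP => /imsetP [x _ ->]; apply/forallP => b.
  by apply/implyP => /imsetP [y _ ->]; apply: (forallP (H x)).
have /forallP Hx := implyP (H (f x)) (imset_f f (isT : x \in T)).
by apply/forallP => y; apply: (implyP (Hx (f y))); apply: imset_f.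
Qed.

Theorem proposition7 (T : finType) (E : rel T) (repr : T -> T) (v w : T) :
  ST_graph E -> repr_function E repr -> E v w ->
  disimplicial E v w = disimplicial_in E (repr_set repr) (repr v) (repr w).
Proof.
move=> ST RF Evw.
have reprE x y := arc_reprE ST x y RF.
have repr_in x : repr x \in repr_set repr by apply: imset_f.
rewrite /disimplicial /disimplicial_in !repr_in !inE Evw -reprE Evw /= -forall2_imset.
apply/eq_forallb => x; rewrite in_setT /=; apply/eq_forallb => y.
by rewrite in_setT -!reprE.
Qed.
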